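(* Let $d_0,d_1,d_2\in\mathbb{C}$ and put $\alpha_0=1-2d_0+d_1+d_2$, $\alpha_1=1+d_0-2d_1+d_2$, $\alpha_2=1+d_0+d_1-2d_2$. Let $\tau_0,\tau_1,\tau_2$ be functions of one variable and $G_i(t_1,t_2)=(2t_2)^{d_i/2}\,\tau_i\big(t_1/\sqrt{2t_2}\big)$ ($i=0,1,2$). Then the system $$\Big(D_x^2-xD_x-\frac{\alpha_i-\alpha_{i+1}}{3}\Big)\tau_i\cdot\tau_{i+1}=0\quad(i=0,1,2)$$ is equivalent to the system $(D_{t_1}^2+D_{t_2})\,G_i\cdot G_{i+1}=0$ ($i=0,1,2$).
   Context: Indices mod 3. Hirota operators: $P(D)\,F\cdot G=P(\partial_y)(F(t+y)G(t-y))|_{y=0}$ in the respective variables, e.g. $D_xF\cdot G=F'G-FG'$, $D_x^2F\cdot G=F''G-2F'G'+FG''$. *)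

From Stdlib Require Import Reals.
From Coquelicot Require Import Coquelicot.

Open Scope R_scope.

Definition Cderiv (f : R -> C) (x : R) : C :=
  (Derive (fun y => Re (f y)) x, Derive (fun y => Im (f y)) x).

Definition Cderiv2 (f : R -> C) : R -> C := Cderiv (Cderiv f).

Definition twice_differentiable (f : R -> C) : Prop :=
  forall x : R,
    ex_derive (fun y => Re (f y)) x /\ ex_derive (fun y => Im (f y)) x /\
    ex_derive (fun y => Re (Cderiv f y)) x /\ ex_derive (fun y => Im (Cderiv f y)) x.

Open Scope C_scope.

Definition HD1 (f g : R -> C) (x : R) : C :=
  Cderiv f x * g x - f x * Cderiv g x.
Definition HD2 (f g : R -> C) (x : R) : C :=
  Cderiv2 f x * g x - 2 * (Cderiv f x * Cderiv g x) + f x * Cderiv2 g x.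

Definition pd1 (G : R -> R -> C) (t1 t2 : R) : C := Cderiv (fun s => G s t2) t1.
Definition pd11 (G : R -> R -> C) (t1 t2 : R) : C := Cderiv2 (fun s => G s t2) t1.
Definition pd2 (G : R -> R -> C) (t1 t2 : R) : C := Cderiv (fun s => G t1 s) t2.

Definition HDt1sq (G H : R -> R -> C) (t1 t2 : R) : C :=
  pd11 G t1 t2 * H t1 t2 - 2 * (pd1 G t1 t2 * pd1 H t1 t2) + G t1 t2 * pd11 H t1 t2.
Definition HDt2 (G H : R -> R -> C) (t1 t2 : R) : C :=
  pd2 G t1 t2 * H t1 t2 - G t1 t2 * pd2 H t1 t2.

(* Complex power of a positive real: r^z := exp(z ln r) (principal branch). *)
Definition cpowR (r : R) (z : C) : C :=
  ((exp (Re z * ln r) * cos (Im z * ln r))%R,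
   (exp (Re z * ln r) * sin (Im z * ln r))%R).

(* G(t1,t2) = (2 t2)^{d/2} tau(t1 / sqrt(2 t2)), meaningful for t2 > 0. *)
Definition Gfun (d : C) (tau : R -> C) (t1 t2 : R) : C :=
  cpowR (2 * t2)%R (d / 2) * tau (t1 / sqrt (2 * t2))%R.

(* In the similarity variable x = t1 / sqrt (2 t2), the partial derivative in t1 is
   (2 t2)^(-1/2) d/dx, and the t2-derivative of (2 t2)^(d/2) tau(x) is
   (2 t2)^(d/2 - 1) (d tau - x tau')(x).  Hence (D_t1^2 + D_t2) G_i.G_j is the factor
   (2 t2)^((d_i + d_j)/2 - 1) times (D_x^2 - x D_x + d_i - d_j) tau_i.tau_j
   evaluated at x, and (alpha_i - alpha_j)/3 = d_j - d_i.  Every x is reached at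
   t2 = 1/2, where the factor is 1. *)

From Stdlib Require Import Reals Lra.
From Coquelicot Require Import Coquelicot.

Open Scope C_scope.

Definition is_Cderive (f : R -> C) (x : R) (l : C) : Prop :=
  is_derive (fun y => Re (f y)) x (Re l) /\ is_derive (fun y => Im (f y)) x (Im l).

Lemma is_Cderive_unique f x l : is_Cderive f x l -> Cderiv f x = l.
Proof.
  intros [Hre Him]. destruct l as [a b]. unfold Cderiv.
  f_equal; now apply is_derive_unique.
Qed.

Lemma Cderiv_ext f g x : (forall y, f y = g y) -> Cderiv f x = Cderiv g x.
Proof. intros E. unfold Cderiv. f_equal; apply Derive_ext; intro y; now rewrite E. Qed.

Lemma is_Cderive_const (c : C) x : is_Cderive (fun _ => c) x 0.
Proof. split; simpl; auto_derive; easy. Qed.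

Lemma is_Cderive_mult f g x a b : is_Cderive f x a -> is_Cderive g x b ->
  is_Cderive (fun y => f y * g y) x (a * g x + f x * b).
Proof.
  intros [Hf1 Hf2] [Hg1 Hg2]. rewrite is_derive_Reals in Hf1, Hf2, Hg1, Hg2.
  split; apply is_derive_Reals.
  - replace (Re (a * g x + f x * b)) with
      (Re a * Re (g x) + Re (f x) * Re b - (Im a * Im (g x) + Im (f x) * Im b))%R
      by (destruct a, b, (f x), (g x); simpl; ring).
    apply (derivable_pt_lim_minus (fun y => Re (f y) * Re (g y))%R
             (fun y => Im (f y) * Im (g y))%R);
      now apply derivable_pt_lim_mult.
  - replace (Im (a * g x + f x * b)) with
      (Re a * Im (g x) + Re (f x) * Im b + (Im a * Re (g x) + Im (f x) * Re b))%R
      by (destruct a, b, (f x), (g x); simpl; ring).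
    apply (derivable_pt_lim_plus (fun y => Re (f y) * Im (g y))%R
             (fun y => Im (f y) * Re (g y))%R);
      now apply derivable_pt_lim_mult.
Qed.

Lemma is_Cderive_comp (f : R -> C) (u : R -> R) x a b :
  is_Cderive f (u x) a -> is_derive u x b -> is_Cderive (fun y => f (u y)) x (a * RtoC b).
Proof.
  intros [Hre Him] Hu. split.
  - replace (Re (a * RtoC b)) with (b * Re a)%R by (destruct a; simpl; ring).
    exact (is_derive_comp (fun y => Re (f y)) u x _ _ Hre Hu).
  - replace (Im (a * RtoC b)) with (b * Im a)%R by (destruct a; simpl; ring).
    exact (is_derive_comp (fun y => Im (f y)) u x _ _ Him Hu).
Qed.

Lemma is_Cderive_cpowR (c : C) r : (0 < r)%R ->
  is_Cderive (fun s => cpowR s c) r (c * cpowR r c / RtoC r).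
Proof.
  intros Hr. destruct c as [a b]. unfold cpowR; split; simpl.
  - auto_derive; [lra|]. field. lra.
  - auto_derive; [lra|]. field. lra.
Qed.

Lemma cpowR_1 z : cpowR 1 z = 1.
Proof. unfold cpowR. rewrite ln_1, !Rmult_0_r, exp_0, cos_0, sin_0, Rmult_1_r, Rmult_0_r; reflexivity. Qed.

Lemma twice_differentiable_is_Cderive tau x :
  twice_differentiable tau -> is_Cderive tau x (Cderiv tau x).
Proof. intros h. destruct (h x) as (Hre & Him & _). split; now apply Derive_correct. Qed.

Lemma twice_differentiable_is_Cderive2 tau x :
  twice_differentiable tau -> is_Cderive (Cderiv tau) x (Cderiv2 tau x).
Proof. intros h. destruct (h x) as (_ & _ & Hre & Him). split; now apply Derive_correct. Qed.

Lemma Cderiv_scaled (c : C) (a : R) f x :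
  is_Cderive f (x / a) (Cderiv f (x / a)%R) ->
  Cderiv (fun s => c * f (s / a)%R) x = c * RtoC (/ a) * Cderiv f (x / a)%R.
Proof.
  intros Hf. apply is_Cderive_unique.
  assert (Ha : is_derive (fun s => s / a)%R x (/ a)%R)
    by (unfold Rdiv; auto_derive; [easy | ring]).
  pose proof (is_Cderive_mult _ _ x _ _ (is_Cderive_const c x)
                (is_Cderive_comp f _ x _ _ Hf Ha)) as H.
  replace (c * RtoC (/ a) * Cderiv f (x / a)%R)
    with (0 * f (x / a)%R + c * (Cderiv f (x / a)%R * RtoC (/ a))) by ring.
  exact H.
Qed.

Lemma RtoC_neq_0 r : r <> 0%R -> RtoC r <> 0.
Proof. intros Hr E. now apply Hr, RtoC_inj. Qed.

Lemma RtoC_inv_sqrt_sqr r : (0 < r)%R -> RtoC (/ sqrt r) * RtoC (/ sqrt r) = / RtoC r.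
Proof.
  intros Hr. rewrite <- RtoC_mult, <- Rinv_mult, sqrt_sqrt by lra.
  apply RtoC_inv. lra.
Qed.

Lemma pd1_Gfun d tau t1 t2 : twice_differentiable tau ->
  pd1 (Gfun d tau) t1 t2 =
  cpowR (2 * t2) (d / 2) * RtoC (/ sqrt (2 * t2)) * Cderiv tau (t1 / sqrt (2 * t2))%R.
Proof. intros h. apply Cderiv_scaled, twice_differentiable_is_Cderive, h. Qed.

Lemma pd11_Gfun d tau t1 t2 : twice_differentiable tau -> (0 < t2)%R ->
  pd11 (Gfun d tau) t1 t2 =
  cpowR (2 * t2) (d / 2) / RtoC (2 * t2) * Cderiv2 tau (t1 / sqrt (2 * t2))%R.
Proof.
  intros h Ht. unfold pd11, Cderiv2.
  rewrite (Cderiv_ext _ (fun s => cpowR (2 * t2) (d / 2) * RtoC (/ sqrt (2 * t2))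
                                  * Cderiv tau (s / sqrt (2 * t2))%R))
    by (intro s; now apply pd1_Gfun).
  rewrite Cderiv_scaled by apply twice_differentiable_is_Cderive2, h.
  unfold Cdiv. rewrite <- (RtoC_inv_sqrt_sqr (2 * t2)) by lra. ring.
Qed.

Lemma pd2_Gfun d tau t1 t2 : twice_differentiable tau -> (0 < t2)%R ->
  pd2 (Gfun d tau) t1 t2 =
  cpowR (2 * t2) (d / 2) / RtoC (2 * t2)
  * (d * tau (t1 / sqrt (2 * t2))%R
     - RtoC (t1 / sqrt (2 * t2)) * Cderiv tau (t1 / sqrt (2 * t2))%R).
Proof.
  intros h Ht. unfold pd2, Gfun.
  assert (Hpow : is_Cderive (fun y => cpowR (2 * y) (d / 2)) t2
                   (d / 2 * cpowR (2 * t2) (d / 2) / RtoC (2 * t2) * RtoC 2)).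
  { apply (is_Cderive_comp (fun r => cpowR r (d / 2)) (fun y => 2 * y)%R).
    - apply is_Cderive_cpowR; lra.
    - auto_derive; [easy | ring]. }
  assert (Harg : is_derive (fun y => t1 / sqrt (2 * y))%R t2
                   (- (t1 / sqrt (2 * t2)) / (2 * t2))%R).
  { assert (Hq : (sqrt (2 * t2) * sqrt (2 * t2) = 2 * t2)%R) by (apply sqrt_sqrt; lra).
    assert (Hq0 : (0 < sqrt (2 * t2))%R) by (apply sqrt_lt_R0; lra).
    auto_derive; [repeat split; lra |]. rewrite Hq. field. lra. }
  rewrite (is_Cderive_unique _ _ _ (is_Cderive_mult _ _ t2 _ _ Hpow
             (is_Cderive_comp tau _ t2 _ _ (twice_differentiable_is_Cderive tau _ h) Harg))).
  rewrite RtoC_div, RtoC_opp by lra.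
  field. apply RtoC_neq_0. lra.
Qed.

Definition HDreduced (k : C) (f g : R -> C) (x : R) : C :=
  HD2 f g x - RtoC x * HD1 f g x - k * (f x * g x).

Lemma HDt1sq_plus_HDt2_Gfun di dj ti tj t1 t2 :
  twice_differentiable ti -> twice_differentiable tj -> (0 < t2)%R ->
  HDt1sq (Gfun di ti) (Gfun dj tj) t1 t2 + HDt2 (Gfun di ti) (Gfun dj tj) t1 t2 =
  cpowR (2 * t2) (di / 2) * cpowR (2 * t2) (dj / 2) / RtoC (2 * t2)
  * HDreduced (dj - di) ti tj (t1 / sqrt (2 * t2)).
Proof.
  intros hi hj Ht.
  unfold HDt1sq, HDt2.
  rewrite !pd11_Gfun, !pd1_Gfun, !pd2_Gfun by assumption.
  unfold Gfun, HDreduced, HD2, HD1, Cderiv2, Cdiv.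
  rewrite <- (RtoC_inv_sqrt_sqr (2 * t2)) by lra.
  ring.
Qed.

Lemma HDreduced_iff_HDt1sq_plus_HDt2 di dj ti tj :
  twice_differentiable ti -> twice_differentiable tj ->
  (forall x, HDreduced (dj - di) ti tj x = 0) <->
  (forall t1 t2, (0 < t2)%R ->
     HDt1sq (Gfun di ti) (Gfun dj tj) t1 t2 + HDt2 (Gfun di ti) (Gfun dj tj) t1 t2 = 0).
Proof.
  intros hi hj. split.
  - intros H t1 t2 Ht.
    now rewrite HDt1sq_plus_HDt2_Gfun, H, Cmult_0_r.
  - intros H x.
    assert (Hhalf : (0 < / 2)%R) by lra.
    specialize (H x (/ 2)%R Hhalf).
    rewrite HDt1sq_plus_HDt2_Gfun in H by assumption.
    replace (2 * / 2)%R with 1%R in H by field.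
    rewrite sqrt_1, Rdiv_1_r, !cpowR_1 in H.
    rewrite <- H. field.
Qed.

Theorem proposition5p2 (d0 d1 d2 : C) (tau0 tau1 tau2 : R -> C)
  (h0 : twice_differentiable tau0) (h1 : twice_differentiable tau1)
  (h2 : twice_differentiable tau2) :
  let alpha0 := 1 - 2 * d0 + d1 + d2 in
  let alpha1 := 1 + d0 - 2 * d1 + d2 in
  let alpha2 := 1 + d0 + d1 - 2 * d2 in
  let G0 := Gfun d0 tau0 in
  let G1 := Gfun d1 tau1 in
  let G2 := Gfun d2 tau2 in
  (forall x : R,
     HD2 tau0 tau1 x - RtoC x * HD1 tau0 tau1 x - (alpha0 - alpha1) / 3 * (tau0 x * tau1 x) = 0 /\
     HD2 tau1 tau2 x - RtoC x * HD1 tau1 tau2 x - (alpha1 - alpha2) / 3 * (tau1 x * tau2 x) = 0 /\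
     HD2 tau2 tau0 x - RtoC x * HD1 tau2 tau0 x - (alpha2 - alpha0) / 3 * (tau2 x * tau0 x) = 0)
  <->
  (forall t1 t2 : R, (0 < t2)%R ->
     HDt1sq G0 G1 t1 t2 + HDt2 G0 G1 t1 t2 = 0 /\
     HDt1sq G1 G2 t1 t2 + HDt2 G1 G2 t1 t2 = 0 /\
     HDt1sq G2 G0 t1 t2 + HDt2 G2 G0 t1 t2 = 0).
Proof.
  intros alpha0 alpha1 alpha2 G0 G1 G2.
  replace ((alpha0 - alpha1) / 3) with (d1 - d0) by (unfold alpha0, alpha1; field).
  replace ((alpha1 - alpha2) / 3) with (d2 - d1) by (unfold alpha1, alpha2; field).
  replace ((alpha2 - alpha0) / 3) with (d0 - d2) by (unfold alpha2, alpha0; field).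
  pose proof (HDreduced_iff_HDt1sq_plus_HDt2 d0 d1 tau0 tau1 h0 h1) as E01.
  pose proof (HDreduced_iff_HDt1sq_plus_HDt2 d1 d2 tau1 tau2 h1 h2) as E12.
  pose proof (HDreduced_iff_HDt1sq_plus_HDt2 d2 d0 tau2 tau0 h2 h0) as E20.
  split.
  - intros H t1 t2 Ht.
    split; [|split]; [apply E01 | apply E12 | apply E20]; try exact Ht;
      intro x; now destruct (H x) as (? & ? & ?).
  - intros H x.
    split; [|split]; [apply E01 | apply E12 | apply E20];
      intros t1 t2 Ht; now destruct (H t1 t2 Ht) as (? & ? & ?).
Qed.
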